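(* (Progress.) For every expression $e$ and type $\tau$: if $\varnothing\vdash e:\tau$, then either $e$ is a value or there exists an expression $e'$ with $e\mapsto e'$.
   Context: This concerns the ''filtered stepper calculus''. Syntax: actions $a ::= \mathsf{skip} \mid \mathsf{step}$; gas $g ::= \mathsf{one} \mid \mathsf{all}$; priorities $l \in \mathbb{N}$. Patterns $p ::= x \mid p(p) \mid \lambda x.p \mid p+p \mid \underline{n} \mid \$e \mid \$v$ (the pattern typing rules also admit $\mathrm{fix}\,x.p$). A filter is a triple $f=(p,a,g)$. Expressions $e ::= x \mid e(e) \mid \lambda x.e \mid \mathrm{fix}\,x.e \mid e+e \mid \underline{n} \mid \mathrm{filter}_f(e) \mid \langle e\rangle^{a,g,l}$ (the last is called a residue), taken up to $\alpha$-equivalence; $\underline{n}$ ranges over numerals. Evaluation contexts $\mathcal{E} ::= \circ \mid \mathcal{E}(e) \mid e(\mathcal{E}) \mid \mathcal{E}+e \mid e+\mathcal{E} \mid \mathrm{filter}_f(\mathcal{E}) \mid \langle \mathcal{E}\rangle^{a,g,l}$, with exactly one hole; $\mathcal{E}[e]$ is the result of plugging $e$ into the hole. The values are exactly $\lambda x.e$ and numerals $\underline{n}$ (fixpoints, filters and residues are never values). Substitution $[v/x]e$ is standard capture-avoiding substitution, which passes through residues unchanged, through filters (substituting also into the filter's pattern), and stops at binders $\lambda x$ and $\mathrm{fix}\,x$ of the same variable. Decomposition $e = \mathcal{E}[e_0]$ (with $e_0$ a redex) is the non-deterministic relation: $\langle v\rangle^{a,g,l}$ and $\mathrm{filter}_f(v)$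 with $v$ a value decompose as hole $\circ$ with redex themselves; if $e$ decomposes as $\mathcal{E}$ and $e_0$ then $\langle e\rangle^{a,g,l}$ decomposes as $\langle\mathcal{E}\rangle^{a,g,l}$ and $e_0$, and $\mathrm{filter}_f(e)$ as $\mathrm{filter}_f(\mathcal{E})$ and $e_0$; $e_1(e_2)$ decomposes as $\mathcal{E}_1(e_2)$ if $e_1$ decomposes as $\mathcal{E}_1$, as $e_1(\mathcal{E}_2)$ if $e_1$ is a value and $e_2$ decomposes as $\mathcal{E}_2$, and as $\circ$ with redex $e_1(e_2)$ if both are values; identically for $e_1+e_2$; $\mathrm{fix}\,x.e$ decomposes as $\circ$ with redex itself. Instruction transitions $e_0 \to e'$: $(\lambda x.e_1)(v)\to [v/x]e_1$ for a value $v$; $\underline{n_1}+\underline{n_2}\to\underline{n_1+n_2}$; $\mathrm{fix}\,x.e\to[\mathrm{fix}\,x.e/x]e$; $\langle v\rangle^{a,g,l}\to v$ and $\mathrm{filter}_f(v)\to v$ for a value $v$. Unfiltered step: $e\mapsto e'$ holds if $e=\mathcal{E}_0[e_0]$ is a decomposition, $e_0\to e_0'$, and $e'=\mathcal{E}_0[e_0']$. Typing: types $\tau ::= \mathbb{N}\mid \tau\to\tau$. $\Gamma\vdash e:\tau$ is given by the usual Curry-style simply-typed rules: variables from $\Gamma$; $\lambda x.e : \tau_x\to\tau_e$ if $\Gamma,x{:}\tau_x\vdash e:\tau_e$; application; numerals have type $\mathbb{N}$; $e_1+e_2:\mathbb{N}$ if both summands have type $\mathbb{N}$; $\mathrm{fix}\,x.e:\tau$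 if $\Gamma,x{:}\tau\vdash e:\tau$; $\mathrm{filter}_{(p,a,g)}(e):\tau_e$ if $\Gamma\vdash p:\tau_p$ for some $\tau_p$ and $\Gamma\vdash e:\tau_e$; $\langle e\rangle^{a,g,l}:\tau$ if $\Gamma\vdash e:\tau$. Pattern typing $\Gamma\vdash p:\tau$: $\$e$ and $\$v$ have every type; variables, $\lambda$, application, numerals, addition and $\mathrm{fix}$ are typed by the analogous rules. $\varnothing$ is the empty context. *)

(* Filtered stepper calculus: syntax, substitution, decomposition, steps, typing. Binders use de Bruijn indices (this realizes "up to alpha-equivalence"). *)
From Stdlib Require Import Arith List.

Inductive action := skip | step.
Inductive gas := one | all.

(* Patterns; variables are de Bruijn indices into the ambient context.
   PLam and PFix bind index 0 in their body. *)
Inductive pat :=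
| PVar : nat -> pat
| PApp : pat -> pat -> pat
| PLam : pat -> pat
| PPlus : pat -> pat -> pat
| PNum : nat -> pat
| PAnyE : pat
| PAnyV : pat
| PFix : pat -> pat.

Definition filt : Type := (pat * action * gas)%type.

Inductive expr :=
| Var : nat -> expr
| App : expr -> expr -> expr
| Lam : expr -> expr
| Fix : expr -> expr
| Plus : expr -> expr -> expr
| Num : nat -> expr
| Filter : filt -> expr -> expr
| Residue : expr -> action -> gas -> nat -> expr.

Definition is_value (e : expr) : Prop :=
  match e with Lam _ | Num _ => True | _ => False end.

Fixpoint pshift (c : nat) (p : pat) : pat :=
  match p with
  | PVar x => if x <? c then PVar x else PVar (S x)
  | PApp p1 p2 => PApp (pshift c p1) (pshift c p2)
  | PLam p1 => PLam (pshift (S c) p1)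
  | PPlus p1 p2 => PPlus (pshift c p1) (pshift c p2)
  | PNum n => PNum n
  | PAnyE => PAnyE
  | PAnyV => PAnyV
  | PFix p1 => PFix (pshift (S c) p1)
  end.

Fixpoint shift (c : nat) (e : expr) : expr :=
  match e with
  | Var x => if x <? c then Var x else Var (S x)
  | App e1 e2 => App (shift c e1) (shift c e2)
  | Lam e1 => Lam (shift (S c) e1)
  | Fix e1 => Fix (shift (S c) e1)
  | Plus e1 e2 => Plus (shift c e1) (shift c e2)
  | Num n => Num n
  | Filter (p, a, g) e1 => Filter (pshift c p, a, g) (shift c e1)
  | Residue e1 a g l => Residue (shift c e1) a g l
  end.

(* Pattern variables are pattern syntax; substituting an expression into a
   pattern replaces a variable by the pattern built from that expression. *)
Fixpoint pat_of_expr (e : expr) : pat :=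
  match e with
  | Var x => PVar x
  | App e1 e2 => PApp (pat_of_expr e1) (pat_of_expr e2)
  | Lam e1 => PLam (pat_of_expr e1)
  | Fix e1 => PFix (pat_of_expr e1)
  | Plus e1 e2 => PPlus (pat_of_expr e1) (pat_of_expr e2)
  | Num n => PNum n
  | Filter _ e1 => pat_of_expr e1
  | Residue e1 _ _ _ => pat_of_expr e1
  end.

Fixpoint psubst (k : nat) (v : expr) (p : pat) : pat :=
  match p with
  | PVar x => if x =? k then pat_of_expr v
              else if x <? k then PVar x else PVar (pred x)
  | PApp p1 p2 => PApp (psubst k v p1) (psubst k v p2)
  | PLam p1 => PLam (psubst (S k) (shift 0 v) p1)
  | PPlus p1 p2 => PPlus (psubst k v p1) (psubst k v p2)
  | PNum n => PNum n
  | PAnyE => PAnyE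
  | PAnyV => PAnyV
  | PFix p1 => PFix (psubst (S k) (shift 0 v) p1)
  end.

Fixpoint subst (k : nat) (v : expr) (e : expr) : expr :=
  match e with
  | Var x => if x =? k then v else if x <? k then Var x else Var (pred x)
  | App e1 e2 => App (subst k v e1) (subst k v e2)
  | Lam e1 => Lam (subst (S k) (shift 0 v) e1)
  | Fix e1 => Fix (subst (S k) (shift 0 v) e1)
  | Plus e1 e2 => Plus (subst k v e1) (subst k v e2)
  | Num n => Num n
  | Filter (p, a, g) e1 => Filter (psubst k v p, a, g) (subst k v e1)
  | Residue e1 a g l => Residue e1 a g l
  end.

Definition subst0 (v e : expr) : expr := subst 0 v e.

Inductive ectx :=
| Hole : ectx
| CAppL : ectx -> expr -> ectx
| CAppR : expr -> ectx -> ectx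
| CPlusL : ectx -> expr -> ectx
| CPlusR : expr -> ectx -> ectx
| CFilter : filt -> ectx -> ectx
| CResidue : ectx -> action -> gas -> nat -> ectx.

Fixpoint plug (E : ectx) (e : expr) : expr :=
  match E with
  | Hole => e
  | CAppL E1 e2 => App (plug E1 e) e2
  | CAppR e1 E2 => App e1 (plug E2 e)
  | CPlusL E1 e2 => Plus (plug E1 e) e2
  | CPlusR e1 E2 => Plus e1 (plug E2 e)
  | CFilter f E1 => Filter f (plug E1 e)
  | CResidue E1 a g l => Residue (plug E1 e) a g l
  end.

Inductive decomp : expr -> ectx -> expr -> Prop :=
| D_res_val : forall v a g l, is_value v ->
    decomp (Residue v a g l) Hole (Residue v a g l)
| D_filter_val : forall f v, is_value v ->
    decomp (Filter f v) Hole (Filter f v)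
| D_res : forall e E e0 a g l, decomp e E e0 ->
    decomp (Residue e a g l) (CResidue E a g l) e0
| D_filter : forall f e E e0, decomp e E e0 ->
    decomp (Filter f e) (CFilter f E) e0
| D_appL : forall e1 e2 E1 e0, decomp e1 E1 e0 ->
    decomp (App e1 e2) (CAppL E1 e2) e0
| D_appR : forall e1 e2 E2 e0, is_value e1 -> decomp e2 E2 e0 ->
    decomp (App e1 e2) (CAppR e1 E2) e0
| D_app : forall e1 e2, is_value e1 -> is_value e2 ->
    decomp (App e1 e2) Hole (App e1 e2)
| D_plusL : forall e1 e2 E1 e0, decomp e1 E1 e0 ->
    decomp (Plus e1 e2) (CPlusL E1 e2) e0
| D_plusR : forall e1 e2 E2 e0, is_value e1 -> decomp e2 E2 e0 ->
    decomp (Plus e1 e2) (CPlusR e1 E2) e0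
| D_plus : forall e1 e2, is_value e1 -> is_value e2 ->
    decomp (Plus e1 e2) Hole (Plus e1 e2)
| D_fix : forall e, decomp (Fix e) Hole (Fix e).

Inductive instr : expr -> expr -> Prop :=
| I_beta : forall e1 v, is_value v -> instr (App (Lam e1) v) (subst0 v e1)
| I_plus : forall n1 n2, instr (Plus (Num n1) (Num n2)) (Num (n1 + n2))
| I_fix : forall e, instr (Fix e) (subst0 (Fix e) e)
| I_res : forall v a g l, is_value v -> instr (Residue v a g l) v
| I_filter : forall f v, is_value v -> instr (Filter f v) v.

Definition ustep (e e' : expr) : Prop :=
  exists E0 e0 e0', decomp e E0 e0 /\ instr e0 e0' /\ e' = plug E0 e0'.

Inductive ty := TNat | TArr : ty -> ty -> ty.

Definition ctx := list ty.   (* de Bruijn context: index 0 is the head *)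

Inductive pat_typing : ctx -> pat -> ty -> Prop :=
| PT_var : forall G x t, nth_error G x = Some t -> pat_typing G (PVar x) t
| PT_lam : forall G p tx te, pat_typing (tx :: G) p te ->
    pat_typing G (PLam p) (TArr tx te)
| PT_app : forall G p1 p2 t1 t2, pat_typing G p1 (TArr t2 t1) ->
    pat_typing G p2 t2 -> pat_typing G (PApp p1 p2) t1
| PT_num : forall G n, pat_typing G (PNum n) TNat
| PT_plus : forall G p1 p2, pat_typing G p1 TNat -> pat_typing G p2 TNat ->
    pat_typing G (PPlus p1 p2) TNat
| PT_fix : forall G p t, pat_typing (t :: G) p t -> pat_typing G (PFix p) t
| PT_anye : forall G t, pat_typing G PAnyE t
| PT_anyv : forall G t, pat_typing G PAnyV t.

Inductive typing : ctx -> expr -> ty -> Prop :=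
| T_var : forall G x t, nth_error G x = Some t -> typing G (Var x) t
| T_lam : forall G e tx te, typing (tx :: G) e te ->
    typing G (Lam e) (TArr tx te)
| T_app : forall G e1 e2 t1 t2, typing G e1 (TArr t2 t1) ->
    typing G e2 t2 -> typing G (App e1 e2) t1
| T_num : forall G n, typing G (Num n) TNat
| T_plus : forall G e1 e2, typing G e1 TNat -> typing G e2 TNat ->
    typing G (Plus e1 e2) TNat
| T_fix : forall G e t, typing (t :: G) e t -> typing G (Fix e) t
| T_filter : forall G p a g e tp te, pat_typing G p tp -> typing G e te ->
    typing G (Filter (p, a, g) e) te
| T_residue : forall G e a g l t, typing G e t -> typing G (Residue e a g l) t.

(* Standard progress argument by induction on the typing derivation, which in
   the empty context never uses the variable rule: a closed well-typed term is
   either a value or decomposes around a redex that fires.  Canonical forms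
   identify the values of arrow and natural-number type, so applications and
   additions of values are redexes; [fix], and filters and residues wrapped
   around values, are always redexes; and every other redex found in a
   subterm stays a redex in the corresponding evaluation context. *)
From Stdlib Require Import List.

Definition reducible (e : expr) : Prop :=
  exists E e0 e0', decomp e E e0 /\ instr e0 e0'.

Lemma reducible_ustep (e : expr) : reducible e -> exists e', ustep e e'.
Proof.
  intros (E & e0 & e0' & Hdecomp & Hinstr).
  exists (plug E e0'), E, e0, e0'. auto.
Qed.

Lemma canonical_arrow (G : ctx) (v : expr) (t1 t2 : ty) :
  typing G v (TArr t1 t2) -> is_value v -> exists e, v = Lam e.
Proof.
  intros Hty Hv. destruct v; try contradiction; inversion Hty; eauto.
Qed.

Lemma canonical_nat (G : ctx) (v : expr) :
  typing G v TNat -> is_value v -> exists n, v = Num n.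
Proof.
  intros Hty Hv. destruct v; try contradiction; inversion Hty; eauto.
Qed.

Section Congruence.

Variables (e1 e2 : expr).

Lemma reducible_appL : reducible e1 -> reducible (App e1 e2).
Proof.
  intros (E & e0 & e0' & Hd & Hi). exists (CAppL E e2), e0, e0'.
  split; [constructor |]; assumption.
Qed.

Lemma reducible_appR : is_value e1 -> reducible e2 -> reducible (App e1 e2).
Proof.
  intros Hv (E & e0 & e0' & Hd & Hi). exists (CAppR e1 E), e0, e0'.
  split; [constructor |]; assumption.
Qed.

Lemma reducible_plusL : reducible e1 -> reducible (Plus e1 e2).
Proof.
  intros (E & e0 & e0' & Hd & Hi). exists (CPlusL E e2), e0, e0'.
  split; [constructor |]; assumption.
Qed.

Lemma reducible_plusR : is_value e1 -> reducible e2 -> reducible (Plus e1 e2).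
Proof.
  intros Hv (E & e0 & e0' & Hd & Hi). exists (CPlusR e1 E), e0, e0'.
  split; [constructor |]; assumption.
Qed.

End Congruence.

Lemma reducible_filter (f : filt) (e : expr) :
  is_value e \/ reducible e -> reducible (Filter f e).
Proof.
  intros [Hv | (E & e0 & e0' & Hd & Hi)].
  - exists Hole, (Filter f e), e. split; constructor; assumption.
  - exists (CFilter f E), e0, e0'. split; [constructor |]; assumption.
Qed.

Lemma reducible_residue (e : expr) (a : action) (g : gas) (l : nat) :
  is_value e \/ reducible e -> reducible (Residue e a g l).
Proof.
  intros [Hv | (E & e0 & e0' & Hd & Hi)].
  - exists Hole, (Residue e a g l), e. split; constructor; assumption.
  - exists (CResidue E a g l), e0, e0'. split; [constructor |]; assumption.
Qed.

Lemma reducible_fix (e : expr) : reducible (Fix e).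
Proof.
  exists Hole, (Fix e), (subst0 (Fix e) e). split; constructor.
Qed.

Lemma reducible_beta (e1 v : expr) : is_value v -> reducible (App (Lam e1) v).
Proof.
  intros Hv. exists Hole, (App (Lam e1) v), (subst0 v e1).
  split; constructor; simpl; auto.
Qed.

Lemma reducible_add (n1 n2 : nat) : reducible (Plus (Num n1) (Num n2)).
Proof.
  exists Hole, (Plus (Num n1) (Num n2)), (Num (n1 + n2)).
  split; constructor; simpl; auto.
Qed.

Lemma typing_nil_value_or_reducible (e : expr) (t : ty) :
  typing nil e t -> is_value e \/ reducible e.
Proof.
  remember (@nil ty) as G eqn:HG.
  induction 1; subst G.
  - destruct x; discriminate.
  - left; exact I.
  - right.
    destruct (IHtyping1 eq_refl) as [Hv1 | Hr1]; [| now apply reducible_appL].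
    destruct (IHtyping2 eq_refl) as [Hv2 | Hr2]; [| now apply reducible_appR].
    destruct (canonical_arrow _ _ _ _ H Hv1) as [body ->].
    now apply reducible_beta.
  - left; exact I.
  - right.
    destruct (IHtyping1 eq_refl) as [Hv1 | Hr1]; [| now apply reducible_plusL].
    destruct (IHtyping2 eq_refl) as [Hv2 | Hr2]; [| now apply reducible_plusR].
    destruct (canonical_nat _ _ H Hv1) as [n1 ->].
    destruct (canonical_nat _ _ H0 Hv2) as [n2 ->].
    apply reducible_add.
  - right; apply reducible_fix.
  - right; apply reducible_filter; auto.
  - right; apply reducible_residue; auto.
Qed.

Theorem theorem2 : forall (e : expr) (t : ty),
  typing nil e t -> is_value e \/ exists e', ustep e e'.
Proof.
  intros e t Hty.
  destruct (typing_nil_value_or_reducible e t Hty) as [Hv | Hr].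
  - left; exact Hv.
  - right; apply reducible_ustep, Hr.
Qed.
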